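(* The set operad $\mathcal{C}om\mathcal{T}rias=(\mathcal{C}om\mathcal{T}rias_n)_{n\ge1}$, with $\mathcal{C}om\mathcal{T}rias_n=\{e^n_J\mid \emptyset\neq J\subset[n]\}$, $\mathbb{S}_n$ acting through its action on subsets of $[n]$, and composition $\mu(e^k_J;e^{i_1}_{J_1},\dots,e^{i_k}_{J_k})=e^{i_1+\cdots+i_k}_{\bar J}$ with $\bar J=\bigcup_{j\in J}\{i_1+\cdots+i_{j-1}+a\mid a\in J_j\}$, is a basic-set operad.
   Context: A set operad is basic-set if for all $\nu_1\in P_{i_1},\dots,\nu_t\in P_{i_t}$ the map $P_t\to P_{i_1+\cdots+i_t}$, $\nu\mapsto\mu(\nu;\nu_1,\dots,\nu_t)$ is injective. *)

From mathcomp Require Import all_boot.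
Set Implicit Arguments. Unset Strict Implicit. Unset Printing Implicit Defensive.

(* ComTrias_n = { e^n_J | J nonempty subset of [n] }; we represent e^n_J by
   J : {set 'I_n} (0-based indexing: [n] = {0,...,n-1}) with J != set0. *)
Definition ComTrias_elem (n : nat) (J : {set 'I_n}) : bool := J != set0.

(* offset j = i_1 + ... + i_{j-1}  (0-based: sum of i l for l < j) *)
Definition offset (k : nat) (i : 'I_k -> nat) (j : 'I_k) : nat :=
  \sum_(l < k | (l < j)%N) i l.

Definition ct_compose (k : nat) (i : 'I_k -> nat) (J : {set 'I_k})
  (Js : forall j : 'I_k, {set 'I_(i j)}) : {set 'I_(\sum_(j < k) i j)} :=
  [set x : 'I_(\sum_(j < k) i j) |
     [exists j : 'I_k, (j \in J) &&
        [exists a : 'I_(i j), (a \in Js j) && (val x == offset i j + val a)]]].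

(** The points of the composite are laid out in consecutive blocks, the [j]-th
    block occupying [offset j + a] for [a < i j]; distinct blocks are disjoint,
    so a point of block [j] decodes uniquely to [(j, a)].  Since every [J_j] is
    nonempty, block [j] meets the composite exactly when [j \in J], which
    recovers [J] from the composite. *)
From mathcomp Require Import all_boot.

Set Implicit Arguments.
Unset Strict Implicit.
Unset Printing Implicit Defensive.

Lemma leq_sum_subpred (I : Type) (r : seq I) (P Q : pred I) (F : I -> nat) :
  (forall x, P x -> Q x) -> \sum_(x <- r | P x) F x <= \sum_(x <- r | Q x) F x.
Proof. exact: (@sub_le_big _ addn) leqnn (fun m n => leq_addr n m) _ _ _ _ _ _. Qed.

Section Blocks.

Variables (k : nat) (i : 'I_k -> nat).

Lemma offset_addE (j : 'I_k) :
  offset i j + i j = \sum_(l < k | (l <= j)%N) i l.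
Proof.
rewrite [RHS](bigD1 j) //= addnC /offset; congr (_ + _).
by apply: eq_bigl => l; rewrite ltn_neqAle andbC.
Qed.

Lemma offset_add_leq (j j' : 'I_k) :
  (j < j')%N -> offset i j + i j <= offset i j'.
Proof.
move=> lt_jj'; rewrite offset_addE /offset.
apply: leq_sum_subpred => l le_lj.
exact: leq_ltn_trans le_lj lt_jj'.
Qed.

Lemma offset_add_leq_sum (j : 'I_k) :
  offset i j + i j <= \sum_(l < k) i l.
Proof. by rewrite offset_addE; apply: leq_sum_subpred. Qed.

Lemma block_ord_subproof (j : 'I_k) (a : 'I_(i j)) :
  offset i j + a < \sum_(l < k) i l.
Proof. by apply: (leq_trans _ (offset_add_leq_sum j)); rewrite ltn_add2l. Qed.

Definition block_ord (j : 'I_k) (a : 'I_(i j)) : 'I_(\sum_(l < k) i l) :=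
  Ordinal (block_ord_subproof a).

Lemma offset_add_ltn (j j' : 'I_k) (a : 'I_(i j)) (a' : 'I_(i j')) :
  (j < j')%N -> offset i j + a < offset i j' + a'.
Proof.
move=> lt_jj'; apply: (leq_trans _ (leq_addr a' _)).
by apply: (leq_trans _ (offset_add_leq lt_jj')); rewrite ltn_add2l.
Qed.

Lemma offset_add_inj (j j' : 'I_k) (a : 'I_(i j)) (a' : 'I_(i j')) :
  offset i j + a = offset i j' + a' -> j = j'.
Proof.
move=> eq_pos; apply/val_inj.
case: (ltngtP j j') => // [lt_jj' | lt_j'j].
- by move: (offset_add_ltn a a' lt_jj'); rewrite eq_pos ltnn.
- by move: (offset_add_ltn a' a lt_j'j); rewrite eq_pos ltnn.
Qed.

Lemma mem_ct_compose_block (J : {set 'I_k}) (Js : forall j : 'I_k, {set 'I_(i j)})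
    (j : 'I_k) (a : 'I_(i j)) :
  (block_ord a \in ct_compose J Js) = (j \in J) && (a \in Js j).
Proof.
apply/idP/idP => [|/andP [jJ aJs]]; rewrite inE.
- case/existsP => j' /andP [j'J /existsP [a' /andP [a'Js /eqP /= eq_pos]]].
  have eq_j := offset_add_inj eq_pos; subst j'.
  by rewrite j'J (val_inj (addnI eq_pos)).
- by apply/existsP; exists j; rewrite jJ; apply/existsP; exists a; rewrite aJs /=.
Qed.

End Blocks.

Theorem mainTheorem7 :
  forall (k : nat) (i : 'I_k -> nat) (Js : forall j : 'I_k, {set 'I_(i j)}),
    (forall j : 'I_k, ComTrias_elem (Js j)) ->
    forall J J' : {set 'I_k},
      ComTrias_elem J -> ComTrias_elem J' ->
      ct_compose J Js = ct_compose J' Js -> J = J'.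
Proof.
move=> k i Js Js_nonempty J J' _ _ eq_compose; apply/setP => j.
have /set0Pn [a aJs] := Js_nonempty j.
move/setP/(_ (block_ord a)): eq_compose.
by rewrite !mem_ct_compose_block aJs !andbT.
Qed.
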